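(* (i) For every integer $n\ge 2$ there exists a graph $G$ with $B_{dom}(G)=n$. (ii) There exist graphs $G$ and $H$ with the same dominated chromatic number for which $|B_{dom}(G)-B_{dom}(H)|$ is arbitrarily large; that is, for every positive integer $N$ there exist graphs $G,H$ with $\chi_{dom}(G)=\chi_{dom}(H)$ and $|B_{dom}(G)-B_{dom}(H)|\ge N$.
   Context: A dominated coloring of a graph is a proper coloring in which every color class is dominated by at least one vertex, i.e. for each color class $C$ there is a vertex adjacent to every vertex of $C$; $\chi_{dom}(G)$ is the minimum number of colors in a dominated coloring. The dom-bondage number $B_{dom}(G)$ is the minimum number of edges of $G$ whose removal changes the dominated chromatic number of $G$. *)

From mathcomp Require Import all_boot.
Set Implicit Arguments. Unset Strict Implicit. Unset Printing Implicit Defensive.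

Section Graphs.
Variable T : finType.

Definition simple_graph (e : rel T) : Prop :=
  symmetric e /\ irreflexive e.

Definition edges (e : rel T) : {set {set T}} :=
  [set A : {set T} | [exists x : T, exists y : T, e x y && (A == [set x; y])]].

Definition remove_edges (e : rel T) (F : {set {set T}}) : rel T :=
  fun x y => e x y && ([set x; y] \notin F).

Definition no_isolated (e : rel T) : Prop :=
  forall x : T, exists y : T, e x y.

Definition dominated_coloring (e : rel T) (k : nat) (c : T -> 'I_k) : Prop :=
  (forall x y : T, e x y -> c x != c y) /\
  (forall i : 'I_k, exists v : T, forall x : T, c x = i -> e v x).

Definition is_chi_dom (e : rel T) (k : nat) : Prop :=
  (exists c : T -> 'I_k, dominated_coloring e c) /\
  (forall k', k' < k -> forall c : T -> 'I_k', ~ dominated_coloring e c).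

(* B_dom(G) = b : minimum number of edges whose removal changes chi_dom
   (removals are required to leave a graph without isolated vertices, so that
   chi_dom of the resulting graph is defined) *)
Definition is_Bdom (e : rel T) (b : nat) : Prop :=
  (exists F : {set {set T}},
      [/\ F \subset edges e, #|F| = b, no_isolated (remove_edges e F) &
          exists k k', [/\ is_chi_dom e k, is_chi_dom (remove_edges e F) k' & k <> k']])
  /\
  (forall F : {set {set T}}, F \subset edges e -> #|F| < b ->
      no_isolated (remove_edges e F) ->
      forall k k', is_chi_dom e k -> is_chi_dom (remove_edges e F) k' -> k = k').

End Graphs.

(* Both parts are witnessed by complete bipartite graphs: B_dom(K_{n,n}) = n
   for n >= 2.  No dominated colouring uses a single colour (the dominator of
   that class would be adjacent to itself), and colouring by sides is a
   dominated 2-colouring of K_{n,n}, so chi_dom(K_{n,n}) = 2.  Deleting fewer than n edges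
   leaves, on each side, a vertex still adjacent to the whole other side, so
   the side colouring remains dominated.  Deleting a perfect matching kills
   every dominated 2-colouring, hence changes chi_dom.  Part (ii) compares
   K_{2,2} with K_{N+2,N+2}. *)
From Stdlib Require Import Classical.
From mathcomp Require Import all_boot zify.

Set Implicit Arguments.
Unset Strict Implicit.
Unset Printing Implicit Defensive.

Lemma ex_minimal_nat (P : nat -> Prop) m :
  P m -> exists k, P k /\ forall k', k' < k -> ~ P k'.
Proof.
elim/ltn_ind: m => m IHm Pm.
case: (classic (exists2 k, k < m & P k)) => [[k ltkm Pk] | noPlt].
- exact: IHm Pk.
- by exists m; split => // k ltkm Pk; apply: noPlt; exists k.
Qed.

Lemma ord2_cases (i : 'I_2) : i = ord0 \/ i = ord_max.
Proof. by case: i => [[|[|k]] ltk2] //; [left | right]; apply: val_inj. Qed.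

Section DominatedChromaticNumber.
Variables (T : finType) (r : rel T).
Hypothesis r_irr : irreflexive r.

Lemma dominated_coloring_ge2 (x0 : T) k (c : T -> 'I_k) :
  dominated_coloring r c -> 2 <= k.
Proof.
case: k c => [|[|k]] c [_ dom] //; first by case: (c x0).
have [v dom_v] := dom ord0.
have cv0 : c v = ord0 by apply: val_inj; case: (c v) => [[|]].
by move: (dom_v v cv0); rewrite r_irr.
Qed.

Lemma is_chi_dom2 (x0 : T) :
  (exists c : T -> 'I_2, dominated_coloring r c) -> is_chi_dom r 2.
Proof.
move=> col2; split=> // k ltk2 c /(dominated_coloring_ge2 x0).
by rewrite leqNgt ltk2.
Qed.

Lemma is_chi_dom_uniq k k' : is_chi_dom r k -> is_chi_dom r k' -> k = k'.
Proof.
case=> [[c col] mink] [[c' col'] mink'].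
by case: (ltngtP k k') => // [/mink'/(_ c) | /mink/(_ c')].
Qed.

Hypothesis r_sym : symmetric r.

(* Giving every vertex its own colour is dominated as soon as nothing is
   isolated: a neighbour of x dominates the class {x}. *)
Lemma is_chi_dom_exists : no_isolated r -> exists k, is_chi_dom r k.
Proof.
move=> no_iso.
have col_rank : dominated_coloring r (@enum_rank T).
  split=> [x y rxy | i].
    by apply: contraTneq rxy => /enum_rank_inj ->; rewrite r_irr.
  have [v rv] := no_iso (enum_val i).
  exists v => x rank_x.
  by rewrite r_sym -(enum_rankK x) rank_x.
have [k [[c col] mink]] :=
  @ex_minimal_nat (fun k => exists c : T -> 'I_k, dominated_coloring r c)
                  _ (ex_intro _ _ col_rank).
exists k; split=> [|k' ltk' c' col']; first by exists c.
by apply: (mink k') => //; exists c'.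
Qed.

End DominatedChromaticNumber.

Section CompleteBipartite.
Variable n : nat.

Definition bipartite_vertex := (bool * 'I_n.+2)%type.

Definition complete_bipartite : rel bipartite_vertex := fun x y => x.1 != y.1.

Definition perfect_matching : {set {set bipartite_vertex}} :=
  [set [set (false, i); (true, i)] | i : 'I_n.+2].

Lemma complete_bipartite_simple : simple_graph complete_bipartite.
Proof. by split=> [x y | x]; rewrite /complete_bipartite ?eqxx // eq_sym. Qed.

Lemma mem_perfect_matching (x y : bipartite_vertex) :
  x.1 != y.1 -> ([set x; y] \in perfect_matching) = (x.2 == y.2).
Proof.
case: x y => [a i] [b j] /= neq_ab; apply/imsetP/eqP => [[k _ xyE] | <-].
  have := set21 (a, i) (b, j); have := set22 (a, i) (b, j).
  by rewrite xyE !inE => /orP[] /eqP[_ ->] /orP[] /eqP[_ ->].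
by exists i => //; case: a b neq_ab => [] [] //= _; rewrite setUC.
Qed.

Lemma remove_perfect_matchingE (x y : bipartite_vertex) :
  remove_edges complete_bipartite perfect_matching x y =
  (x.1 != y.1) && (x.2 != y.2).
Proof.
rewrite /remove_edges /complete_bipartite.
by case: (boolP (x.1 != y.1)) => //= /mem_perfect_matching ->.
Qed.

Lemma perfect_matching_sub : perfect_matching \subset edges complete_bipartite.
Proof.
apply/subsetP => _ /imsetP[i _ ->]; rewrite inE.
apply/existsP; exists (false, i); apply/existsP; exists (true, i).
by rewrite eqxx.
Qed.

Lemma card_perfect_matching : #|perfect_matching| = n.+2.
Proof.
rewrite card_imset ?card_ord // => i j eq_ij.
have := set21 (false, i) (true, i).
by rewrite eq_ij !inE !xpair_eqE /= orbF => /eqP.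
Qed.

Lemma no_isolated_remove_perfect_matching :
  no_isolated (remove_edges complete_bipartite perfect_matching).
Proof.
move=> [s i]; exists (~~ s, if i == ord0 then ord_max else ord0).
rewrite remove_perfect_matchingE /=; case: s => /=;
by case: (i =P ord0) => [-> | /eqP].
Qed.

(* The dominators v0 of class 0 and v1 of class 1 lie in the other class,
   so v1 ~ v0; then the vertex on v1's side matched to v0 sees neither of
   them and belongs to no dominated class. *)
Lemma remove_perfect_matching_no_2coloring (c : bipartite_vertex -> 'I_2) :
  ~ dominated_coloring (remove_edges complete_bipartite perfect_matching) c.
Proof.
case=> _ dom; have [v0 dom0] := dom ord0; have [v1 dom1] := dom ord_max.
have cv0 : c v0 = ord_max.
  case: (ord2_cases (c v0)) => // /dom0.
  by rewrite remove_perfect_matchingE eqxx.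
have := dom1 v0 cv0; rewrite remove_perfect_matchingE => /andP[_ neq_v10].
case: (ord2_cases (c (v1.1, v0.2))) => [/dom0 | /dom1];
by rewrite remove_perfect_matchingE /= eqxx ?andbF.
Qed.

Lemma side_coloring_dominated (r : rel bipartite_vertex) :
  (forall x y, r x y -> x.1 != y.1) ->
  (forall s, exists i, forall j, r (s, i) (~~ s, j)) ->
  exists c : bipartite_vertex -> 'I_2, dominated_coloring r c.
Proof.
move=> r_bip full.
exists (fun x => if x.1 then ord_max else ord0); split.
  by move=> [[] a] [[] b] /r_bip.
move=> k; case: (ord2_cases k) => ->.
- have [i full_i] := full true.
  by exists (true, i) => [[[] j]] //= _; apply: full_i.
- have [i full_i] := full false.
  by exists (false, i) => [[[] j]] //= _; apply: full_i.
Qed.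

Lemma complete_bipartite_chi_dom : is_chi_dom complete_bipartite 2.
Proof.
apply: (is_chi_dom2 _ (false, ord0)) => [x | ].
  by rewrite /complete_bipartite eqxx.
apply: side_coloring_dominated => // s.
by exists ord0 => j; rewrite /complete_bipartite; case: s.
Qed.

(* Each edge of F contains at most one vertex of side s, so fewer than n+2
   edges cannot meet every vertex of that side. *)
Lemma exists_vertex_untouched (F : {set {set bipartite_vertex}}) s :
  #|F| < n.+2 -> exists i, forall j, [set (s, i); (~~ s, j)] \notin F.
Proof.
move=> small_F.
have s_neq_ns : (s == ~~ s) = false by case: s.
pose endpoint (A : {set bipartite_vertex}) :=
  odflt ord0 [pick i | (s, i) \in A].
pose touched := [set i | [exists j, [set (s, i); (~~ s, j)] \in F]].
have touched_sub : touched \subset endpoint @: F.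
  apply/subsetP => i; rewrite inE => /existsP[j Fij].
  apply/imsetP; exists [set (s, i); (~~ s, j)] => //.
  rewrite /endpoint; case: pickP => [i' | /(_ i)]; last by rewrite !inE eqxx.
  by rewrite !inE !xpair_eqE eqxx s_neq_ns orbF => /eqP.
have : #|touched| < n.+2.
  apply: leq_ltn_trans (subset_leq_card touched_sub) _.
  exact: leq_ltn_trans (leq_imset_card _ _) small_F.
case: (pickP [pred i | i \notin touched]) => [i /= untouched_i _ | all_touched].
  exists i => j; apply: contra untouched_i => Fij.
  by rewrite inE; apply/existsP; exists j.
suff -> : touched = setT by rewrite cardsT card_ord ltnn.
by apply/setP => i; rewrite in_setT; apply: negbFE; apply: all_touched.
Qed.

Lemma complete_bipartite_Bdom : is_Bdom complete_bipartite n.+2.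
Proof.
split.
  exists perfect_matching; split.
  - exact: perfect_matching_sub.
  - exact: card_perfect_matching.
  - exact: no_isolated_remove_perfect_matching.
  have rm_irr : irreflexive (remove_edges complete_bipartite perfect_matching).
    by move=> x; rewrite remove_perfect_matchingE eqxx.
  have rm_sym : symmetric (remove_edges complete_bipartite perfect_matching).
    by move=> x y; rewrite !remove_perfect_matchingE eq_sym [y.2 == _]eq_sym.
  have [k' chi_k'] :=
    is_chi_dom_exists rm_irr rm_sym no_isolated_remove_perfect_matching.
  exists 2, k'; split => //; first exact: complete_bipartite_chi_dom.
  by move: chi_k' => /[swap] <- [[c /remove_perfect_matching_no_2coloring]].
move=> F _ small_F _ k k' chi_k chi_k'.
rewrite (is_chi_dom_uniq chi_k complete_bipartite_chi_dom).
apply: (is_chi_dom_uniq (is_chi_dom2 _ (false, ord0) _)) chi_k'.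
  by move=> x; rewrite /remove_edges /complete_bipartite eqxx.
apply: side_coloring_dominated => [x y /andP[] // | s].
have [i untouched_i] := exists_vertex_untouched s small_F.
exists i => j; rewrite /remove_edges untouched_i andbT.
by rewrite /complete_bipartite; case: s {untouched_i}.
Qed.

End CompleteBipartite.

Theorem mainTheorem15 :
  (forall n : nat, 2 <= n ->
     exists (T : finType) (e : rel T), simple_graph e /\ is_Bdom e n) /\
  (forall N : nat, 0 < N ->
     exists (T1 : finType) (e1 : rel T1) (T2 : finType) (e2 : rel T2) (k b1 b2 : nat),
       [/\ simple_graph e1 /\ simple_graph e2, is_chi_dom e1 k, is_chi_dom e2 k,
           is_Bdom e1 b1 /\ is_Bdom e2 b2 & N <= maxn b1 b2 - minn b1 b2]).
Proof.
split=> [[|[|m]] // _ | N _].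
  exists (bipartite_vertex m), (@complete_bipartite m).
  by split; [exact: complete_bipartite_simple | exact: complete_bipartite_Bdom].
exists (bipartite_vertex 0), (@complete_bipartite 0).
exists (bipartite_vertex N), (@complete_bipartite N), 2, 2, N.+2; split.
- by split; exact: complete_bipartite_simple.
- exact: complete_bipartite_chi_dom.
- exact: complete_bipartite_chi_dom.
- by split; exact: complete_bipartite_Bdom.
- lia.
Qed.
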